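(* Let $a\in[0.5195,1)$ and $p(z)=(z-a)\prod_{k=1}^{8}(z-z_k)$ with $0.4\le|z_k|\le 1$ for $k=1,\dots,8$, and write $p'(z)=9\prod_{j=1}^{8}(z-\zeta_j)$. Let $r_k=|a-z_k|$, $\rho_j=|a-\zeta_j|$, and suppose $\rho_j>1$ for all $j$. Define $$\Delta=\operatorname{Re}\Big(\frac1a+\sum_{k=1}^{8}\frac1{z_k}\Big),\qquad \sigma=\sum_{k=1}^{8}\frac1{r_k^2}.$$ Then $$\Delta\le-\frac8a+8a+\frac{9}{8a}(1-a^2)\,\sigma.$$ *)

(* Complex numbers are modelled by an arbitrary
   numClosedFieldType C (which includes the complex numbers). *)
From HB Require Import structures.
From mathcomp Require Import all_boot all_order all_algebra.

From HB Require Import structures.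
From mathcomp Require Import all_boot all_order all_algebra.
From mathcomp Require Import ring.
Import Order.TTheory GRing.Theory Num.Theory.
Local Open Scope ring_scope.

(* Proof of Lemma 3.9.  Write p = (X - a) Q with Q = prod_k (X - z_k) and
   p' = 9 prod_j (X - zeta_j).
   Algebraic relations (section RootsAndCriticalPoints, over any field):
   - p'(a) = Q(a) and p''(a) = 2 Q'(a); dividing the logarithmic derivatives
     gives  2 sum_k 1/(a - z_k) = sum_j 1/(a - zeta_j)  (and a is not a z_k);
   - comparing the subleading coefficients of p' (Vieta) gives
     8 (a + sum_k z_k) = 9 sum_j zeta_j.
   Section PointwiseEstimates works over a closed numeric field C (e.g. the
   complex numbers) and proves Gauss-Lucas for the unit disk (so |zeta_j| <= 1)
   and the two estimates:
   - for 0.4 <= |z| <= 1 and 0 < a <= 1, an explicit sum-of-squares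
     certificate bounds Re(1/z) by Re z plus a multiple of
     (1 - a^2)/|a - z|^2 - 1 + 2a Re(1/(a - z));
   - for |zeta| <= 1 and |a - zeta| > 1,  Re(1/(a - zeta)) <= Re(a - zeta).
   Summing the estimates and substituting the relations yields the bound.
   The hypothesis a >= 0.5195 is only used through a > 0. *)

Section RootsAndCriticalPoints.
Context {F : fieldType}.
Implicit Types (a c x : F) (r s : seq F) (Q : {poly F}).

Lemma horner_prod_XsubC r x :
  (\prod_(c <- r) ('X - c%:P)).[x] = \prod_(c <- r) (x - c).
Proof. by rewrite horner_prod; apply: eq_bigr => c _; rewrite hornerXsubC. Qed.

Lemma prod_subr_neq0 r x : (\prod_(c <- r) (x - c) != 0) = (x \notin r).
Proof.
rewrite prodf_seq_neq0; apply/allP/idP => [xr_ne | xr c cr /=].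
  by apply/negP => /xr_ne /=; rewrite subrr eqxx.
by rewrite subr_eq0; apply: contraNneq xr => ->.
Qed.

Lemma horner_deriv_prod_XsubC r x : x \notin r ->
  (\prod_(c <- r) ('X - c%:P))^`().[x] =
  (\prod_(c <- r) (x - c)) * \sum_(c <- r) (x - c)^-1.
Proof.
elim: r => [|c r IH]; first by rewrite !big_nil derivC !hornerE.
rewrite in_cons negb_or => /andP[xc /IH {}IH].
rewrite !big_cons derivM derivXsubC mul1r hornerD hornerM IH hornerXsubC.
rewrite horner_prod_XsubC.
have xc_neq0 : x - c != 0 by rewrite subr_eq0.
by rewrite mulrDr mulrAC mulfV // mul1r !mulrA.
Qed.

(* Vieta for the derivative: if P has n+1 roots r and P' = (n+1) prod_s (X - c),
   then comparing the coefficients of X^(n-1) gives n sum r = (n+1) sum s. *)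
Lemma sum_roots_deriv n r s : size r = n.+1 -> size s = n ->
  (\prod_(c <- r) ('X - c%:P))^`() = n.+1%:R%:P * \prod_(c <- s) ('X - c%:P) ->
  (\sum_(c <- r) c) *+ n = (\sum_(c <- s) c) *+ n.+1.
Proof.
case: n => [|n] size_r size_s deriv_eq.
  by rewrite (size0nil size_s) big_nil mul0rn.
have coef_r := coefPn_prod_XsubC (ps := r).
have coef_s := coefPn_prod_XsubC (ps := s).
rewrite size_r size_s /= in coef_r coef_s.
have := congr1 (fun p : {poly F} => p`_n) deriv_eq.
rewrite /= coef_deriv coefCM coef_r // coef_s // mulrN mulr_natl => /eqP.
by rewrite mulNrn eqr_opp => /eqP.
Qed.

Lemma horner_deriv_mulXsubC a Q : (('X - a%:P) * Q)^`().[a] = Q.[a].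
Proof.
by rewrite derivM derivXsubC mul1r hornerD hornerM hornerXsubC subrr mul0r addr0.
Qed.

Lemma horner_deriv2_mulXsubC a Q :
  (('X - a%:P) * Q)^`()^`().[a] = 2%:R * Q^`().[a].
Proof.
rewrite derivM derivXsubC mul1r derivD derivM derivXsubC mul1r.
by rewrite !hornerD hornerM hornerXsubC subrr mul0r addr0 mulr2n mulrDl mul1r.
Qed.

Section CriticalPointRelations.
Context {a c : F} {rz rzeta : seq F}.
Hypothesis c_neq0 : c != 0.
Hypothesis a_noncritical : a \notin rzeta.
Hypothesis deriv_eq : (('X - a%:P) * \prod_(z <- rz) ('X - z%:P))^`()
  = c%:P * \prod_(w <- rzeta) ('X - w%:P).

(* Since Q(a) = p'(a) != 0, the root a of p is simple. *)
Lemma noncritical_notin_roots : a \notin rz.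
Proof.
rewrite -prod_subr_neq0 -horner_prod_XsubC -(horner_deriv_mulXsubC a) deriv_eq.
by rewrite hornerM hornerC horner_prod_XsubC mulf_neq0 // prod_subr_neq0.
Qed.

(* p''(a)/p'(a) computed in two ways: as 2 Q'(a)/Q(a) and via the critical
   points. *)
Lemma sum_inv_roots_critical :
  2%:R * \sum_(z <- rz) (a - z)^-1 = \sum_(w <- rzeta) (a - w)^-1.
Proof.
have := congr1 (fun p => p^`().[a]) deriv_eq.
rewrite /= horner_deriv2_mulXsubC derivM derivC mul0r add0r hornerM hornerC.
rewrite !horner_deriv_prod_XsubC // ?noncritical_notin_roots //.
have := congr1 (horner^~ a) deriv_eq.
rewrite /= horner_deriv_mulXsubC hornerM hornerC !horner_prod_XsubC => ->.
have pa_neq0 : c * \prod_(w <- rzeta) (a - w) != 0.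
  by rewrite mulf_neq0 // prod_subr_neq0.
by move=> e; apply: (mulfI pa_neq0); rewrite mulrCA e mulrA.
Qed.

End CriticalPointRelations.

End RootsAndCriticalPoints.

Section PointwiseEstimates.
Context {C : numClosedFieldType}.
Implicit Types (a w x z : C) (r : seq C).

Lemma norm_le1_of_balanced_weights r (lam : C -> C) w :
  (forall c, c \in r -> 0 <= lam c) -> 0 < \sum_(c <- r) lam c ->
  (forall c, c \in r -> `|c| <= 1) ->
  \sum_(c <- r) lam c * (w - c) = 0 -> `|w| <= 1.
Proof.
move=> lam_ge0 lam_pos r_disk.
rewrite (eq_bigr (fun c => lam c * w - lam c * c)) => [|c _]; last by rewrite mulrBr.
rewrite sumrB -mulr_suml => /eqP; rewrite subr_eq0 => /eqP balance.
rewrite -(ler_pM2r lam_pos) mul1r -(ger0_norm (ltW lam_pos)) -normrM mulrC balance.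
apply: le_trans (ler_norm_sum _ _ _) _.
rewrite ger0_norm ?(ltW lam_pos) // [leRHS]big_seq [leLHS]big_seq.
apply: ler_sum => c cr.
by rewrite normrM ger0_norm ?lam_ge0 // ler_piMr ?lam_ge0 ?r_disk.
Qed.

(* Gauss-Lucas for the unit disk: at a critical point w that is not a root,
   sum_c 1/(w - c) = 0; conjugating gives sum_c |w - c|^-2 (w - c) = 0. *)
Lemma gauss_lucas_unit_disk r w : r != [::] ->
  (forall c, c \in r -> `|c| <= 1) ->
  (\prod_(c <- r) ('X - c%:P))^`().[w] = 0 -> `|w| <= 1.
Proof.
move=> r_nil r_disk; have [/r_disk // | wr] := boolP (w \in r).
have prod_neq0 : \prod_(c <- r) (w - c) != 0 by rewrite prod_subr_neq0.
rewrite horner_deriv_prod_XsubC // => /eqP.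
rewrite mulf_eq0 (negPf prod_neq0) orFb => /eqP sum_inv0.
have w_sub_neq0 c : c \in r -> w - c != 0.
  by move=> cr; rewrite subr_eq0; apply: contraNneq wr => ->.
apply: (norm_le1_of_balanced_weights r (fun c => `|w - c| ^- 2)) => //.
- by move=> c _; rewrite invr_ge0 exprn_ge0.
- case: r r_nil w_sub_neq0 {r_disk wr sum_inv0 prod_neq0} => // c0 r _ w_sub_neq0.
  rewrite big_cons ltr_pwDl ?invr_gt0 ?exprn_gt0 ?normr_gt0 ?w_sub_neq0 ?mem_head //.
  by apply: sumr_ge0 => c _; rewrite invr_ge0 exprn_ge0.
- have conj_inv u : (u^-1)^* = `|u| ^- 2 * u.
    by rewrite fmorphV invC_norm norm_conjC conjCK.
  under eq_bigr do rewrite -conj_inv.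
  by rewrite -rmorph_sum sum_inv0 rmorph0.
Qed.

Lemma critical_points_in_unit_disk {a} {c : C} {rz rzeta : seq C} {w} :
  `|a| <= 1 -> (forall z, z \in rz -> `|z| <= 1) ->
  (('X - a%:P) * \prod_(z <- rz) ('X - z%:P))^`()
    = c%:P * \prod_(v <- rzeta) ('X - v%:P) ->
  w \in rzeta -> `|w| <= 1.
Proof.
move=> a_disk rz_disk deriv_eq w_crit.
apply: (gauss_lucas_unit_disk (a :: rz)) => // [z|].
  by rewrite in_cons => /predU1P[-> | /rz_disk].
rewrite big_cons deriv_eq hornerM horner_prod_XsubC.
suff /eqP -> : \prod_(v <- rzeta) (w - v) == 0 by rewrite mulr0.
by rewrite -[_ == 0]negbK prod_subr_neq0 negbK.
Qed.

Lemma Re_realB a x : a \is Num.real -> 'Re (a - x) = a - 'Re x.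
Proof. by move=> ar; rewrite raddfB /= (Creal_ReP _ ar). Qed.

Lemma Im_realB a x : a \is Num.real -> 'Im (a - x) = - 'Im x.
Proof. by move=> ar; rewrite raddfB /= (Creal_ImP _ ar) sub0r. Qed.

Lemma normC2_realB a x : a \is Num.real ->
  `|a - x| ^+ 2 = a ^+ 2 - 2%:R * a * 'Re x + `|x| ^+ 2.
Proof.
by move=> ar; rewrite !normC2_Re_Im Re_realB // Im_realB // sqrrN; ring.
Qed.

(* The numerator of the estimate below, with x = Re z, m = |z|^2 and
   |a - z|^2 = a^2 - 2ax + m, is nonnegative: it is a square plus terms that
   are nonnegative because 0 < a <= 1 and 0.16 <= m <= 1, plus 59/625. *)
Lemma estimate_numerator_ge0 a x m : 0 < a -> a <= 1 -> x \is Num.real ->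
  (2%:R / 5%:R) ^+ 2 <= m -> m <= 1 ->
  0 <= 9%:R * m - 8%:R * a * (a ^+ 2 - 2%:R * a * x + m) * x.
Proof.
move=> a_gt0 a_le1 xr m_lb m_ub.
have m_ge0 : 0 <= m by apply: le_trans m_lb; rewrite exprn_ge0 ?divr_ge0 ?ler0n.
have -> : 9%:R * m - 8%:R * a * (a ^+ 2 - 2%:R * a * x + m) * x
   = (a ^+ 2 + m - 4%:R * a * x) ^+ 2
     + (1 - a ^+ 2) * (1 + a ^+ 2 + 2%:R * m)
     + (1 - m) * (m - (2%:R / 5%:R) ^+ 2)
     + 146%:R / 25%:R * (m - (2%:R / 5%:R) ^+ 2) + 59%:R / 625%:R.
  by field.
have sq_ge0 : 0 <= (a ^+ 2 + m - 4%:R * a * x) ^+ 2.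
  have [ar mr] : a \is Num.real /\ m \is Num.real by rewrite !ger0_real ?(ltW a_gt0).
  apply: real_exprn_even_ge0 => //.
  by rewrite rpredB ?rpredD ?rpredX ?rpredM ?realn.
apply: addr_ge0; last by rewrite divr_ge0 ?ler0n.
apply: addr_ge0; last by rewrite mulr_ge0 ?divr_ge0 ?ler0n ?subr_ge0.
apply: addr_ge0; last by rewrite mulr_ge0 ?subr_ge0.
apply: addr_ge0 => //.
apply: mulr_ge0; first by rewrite subr_ge0 exprn_ile1 ?(ltW a_gt0).
by rewrite !addr_ge0 ?mulr_ge0 ?exprn_ge0 ?ler0n ?(ltW a_gt0).
Qed.

(* Estimate for a root z in the annulus 0.4 <= |z| <= 1: the difference of the
   two sides equals (1 - |z|^2) N / (8 a |z|^2 |a - z|^2), with N the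
   nonnegative numerator above. *)
Lemma Re_inv_root_bound a z : 0 < a -> a <= 1 ->
  2%:R / 5%:R <= `|z| <= 1 -> z != a ->
  'Re (z^-1) <= 'Re z + 9%:R / (8%:R * a) *
     ((1 - a ^+ 2) * (`|a - z| ^+ 2)^-1 - 1 + 2%:R * a * 'Re ((a - z)^-1)).
Proof.
move=> a_gt0 a_le1 /andP[z_lb z_ub] z_neq_a.
have ar : a \is Num.real by rewrite ger0_real ?ltW.
have m_lb : (2%:R / 5%:R) ^+ 2 <= `|z| ^+ 2.
  by rewrite lerXn2r ?nnegrE ?divr_ge0 ?ler0n.
have m_le1 : `|z| ^+ 2 <= 1 by rewrite exprn_ile1.
have m_gt0 : 0 < `|z| ^+ 2.
  by apply: lt_le_trans m_lb; rewrite exprn_gt0 ?divr_gt0 ?ltr0n.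
have N_gt0 : 0 < `|a - z| ^+ 2 by rewrite exprn_gt0 // normr_gt0 subr_eq0 eq_sym.
have N_def := normC2_realB a z ar.
have numer_ge0 := estimate_numerator_ge0 _ _ _ a_gt0 a_le1 (Creal_Re z) m_lb m_le1.
rewrite !ReV Re_realB // -subr_ge0.
set x := 'Re z in N_def numer_ge0 *; set m := `|z| ^+ 2 in m_le1 m_gt0 N_def numer_ge0 *.
set N := `|a - z| ^+ 2 in N_gt0 N_def *.
have -> : x + 9%:R / (8%:R * a) * ((1 - a ^+ 2) * N^-1 - 1 + 2%:R * a * ((a - x) / N))
           - x / m
        = (1 - m) * (9%:R * m - 8%:R * a * N * x) / (8%:R * a * m * N).
  rewrite N_def; field.
  by rewrite -N_def (gt_eqF a_gt0) (gt_eqF m_gt0) (gt_eqF N_gt0).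
apply: divr_ge0; last by rewrite !mulr_ge0 ?ler0n ?(ltW a_gt0) ?(ltW m_gt0) ?(ltW N_gt0).
by apply: mulr_ge0; [rewrite subr_ge0 | rewrite N_def].
Qed.

(* Estimate for a critical point zeta in the unit disk, far from a: then
   Re(a - zeta) >= 0 and |a - zeta|^2 > 1, so dividing by |a - zeta|^2
   decreases Re(a - zeta). *)
Lemma Re_inv_le_Re a w : 0 < a -> `|w| <= 1 -> 1 < `|a - w| ->
  'Re ((a - w)^-1) <= 'Re (a - w).
Proof.
move=> a_gt0 w_disk far.
have ar : a \is Num.real by rewrite ger0_real ?ltW.
have N_gt1 : 1 < `|a - w| ^+ 2 by rewrite exprn_egt1.
have Re_ge0 : 0 <= 'Re (a - w).
  have : 0 <= a ^+ 2 + (`|a - w| ^+ 2 - `|w| ^+ 2).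
    apply: addr_ge0; first by rewrite exprn_ge0 ?ltW.
    rewrite subr_ge0 ltW //; apply: le_lt_trans N_gt1.
    by rewrite exprn_ile1.
  have -> : a ^+ 2 + (`|a - w| ^+ 2 - `|w| ^+ 2) = 2%:R * a * 'Re (a - w).
    by rewrite normC2_realB // Re_realB //; ring.
  by rewrite pmulr_rge0 // mulr_gt0 // ltr0n.
rewrite ReV ler_pdivrMr; last exact: lt_trans ltr01 N_gt1.
by rewrite ler_peMr // ltW.
Qed.

(* Summing the two estimates over the eight roots and critical points and
   eliminating sum 1/(a - z_k) and sum z_k with the root relations. *)
Lemma sum_estimates_bound a (z zeta : 'I_8 -> C) : 0 < a ->
  (forall k, 'Re ((z k)^-1) <= 'Re (z k) + 9%:R / (8%:R * a) *
     ((1 - a ^+ 2) * (`|a - z k| ^+ 2)^-1 - 1 + 2%:R * a * 'Re ((a - z k)^-1))) ->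
  (forall j, 'Re ((a - zeta j)^-1) <= 'Re (a - zeta j)) ->
  2%:R * \sum_(k < 8) (a - z k)^-1 = \sum_(j < 8) (a - zeta j)^-1 ->
  (a + \sum_(k < 8) z k) *+ 8 = (\sum_(j < 8) zeta j) *+ 9 ->
  'Re (a^-1 + \sum_(k < 8) (z k)^-1)
    <= - (8%:R / a) + 8%:R * a
       + 9%:R / (8%:R * a) * (1 - a ^+ 2) * \sum_(k < 8) (`|a - z k| ^+ 2)^-1.
Proof.
move=> a_gt0 z_bound zeta_bound inv_sums root_sums.
have ar : a \is Num.real by rewrite ger0_real ?ltW.
set X := 'Re (\sum_(j < 8) zeta j); set Y := 'Re (\sum_(j < 8) (a - zeta j)^-1).
set sigma := \sum_(k < 8) (`|a - z k| ^+ 2)^-1.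
have Y_le : Y <= a *+ 8 - X.
  rewrite /Y /X !raddf_sum /=.
  apply: le_trans (ler_sum _ (fun j _ => zeta_bound j)) _.
  rewrite [leLHS](eq_bigr (fun j => a - 'Re (zeta j))) => [|j _]; last first.
    by rewrite Re_realB.
  by rewrite sumrB sumr_const card_ord -sumrN.
have Re_sum_z : 'Re (\sum_(k < 8) z k) = 9%:R / 8%:R * X - a.
  have := congr1 (fun u => 'Re u) root_sums.
  rewrite /= !raddfMn raddfD /= (Creal_ReP _ ar) -/X => e.
  have n8 : (8%:R : C) != 0 by rewrite pnatr_eq0.
  transitivity ((a + 'Re (\sum_(k < 8) z k)) *+ 8 / 8%:R - a).
    by rewrite -[_ *+ 8]mulr_natr mulfK // [a + _]addrC addrK.
  by rewrite e -[_ *+ 9]mulr_natr; ring.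
have Re_sum_inv_z : 'Re (\sum_(k < 8) (a - z k)^-1) = Y / 2%:R.
  by rewrite /Y -inv_sums ReMl ?realn // [2%:R * _]mulrC mulfK // pnatr_eq0.
have sum_z_bound : 'Re (\sum_(k < 8) (z k)^-1) <= 'Re (\sum_(k < 8) z k)
    + 9%:R / (8%:R * a) * ((1 - a ^+ 2) * sigma - 8%:R
                            + 2%:R * a * 'Re (\sum_(k < 8) (a - z k)^-1)).
  rewrite !raddf_sum; apply: le_trans (ler_sum _ (fun k _ => z_bound k)) _.
  rewrite big_split /= -mulr_sumr !big_split /= -!mulr_sumr sumr_const card_ord.
  by rewrite mulNrn.
have Re_inv_a : 'Re a^-1 = a^-1 by apply/Creal_ReP; rewrite rpredV.
rewrite raddfD /= Re_inv_a; apply: le_trans (lerD (lexx _) sum_z_bound) _.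
rewrite Re_sum_z Re_sum_inv_z -subr_ge0.
rewrite (_ : _ - _ = 9%:R / 8%:R * ((a *+ 8 - X) - Y)); last by field; rewrite gt_eqF.
by rewrite mulr_ge0 ?divr_ge0 ?ler0n ?subr_ge0.
Qed.

End PointwiseEstimates.

Theorem lemma3p9 (C : numClosedFieldType) (a : C) (z zeta : 'I_8 -> C) :
  a \is Num.real ->
  5195%:R / 10000%:R <= a -> a < 1 ->
  (forall k : 'I_8, 2%:R / 5%:R <= `|z k| <= 1) ->
  (('X - a%:P) * \prod_(k < 8) ('X - (z k)%:P))^`()
     = 9%:R%:P * \prod_(j < 8) ('X - (zeta j)%:P) ->
  (forall j : 'I_8, 1 < `|a - zeta j|) ->
  'Re (a^-1 + \sum_(k < 8) (z k)^-1)
    <= - (8%:R / a) + 8%:R * a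
       + 9%:R / (8%:R * a) * (1 - a ^+ 2) * \sum_(k < 8) (`|a - z k| ^+ 2)^-1.
Proof.
move=> _ a_lb a_lt1 z_annulus deriv_eq zeta_far.
have a_gt0 : 0 < a by apply: lt_le_trans a_lb; rewrite divr_gt0 ?ltr0n.
set rz := [seq z k | k <- index_enum 'I_8].
set rzeta := [seq zeta j | j <- index_enum 'I_8].
have deriv_seq : (('X - a%:P) * \prod_(c <- rz) ('X - c%:P))^`()
    = 9%:R%:P * \prod_(c <- rzeta) ('X - c%:P) by rewrite !big_map.
have nine_neq0 : (9%:R : C) != 0 by rewrite pnatr_eq0.
have a_noncritical : a \notin rzeta.
  by apply/mapP => -[j _ a_eq]; move: (zeta_far j); rewrite a_eq subrr normr0 ltr10.
have z_neq_a k : z k != a.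
  apply: contraNneq (noncritical_notin_roots nine_neq0 a_noncritical deriv_seq) => <-.
  by rewrite map_f ?mem_index_enum.
have inv_sums := sum_inv_roots_critical nine_neq0 a_noncritical deriv_seq.
have [size_rz size_rzeta] : size rz = 8 /\ size rzeta = 8.
  by rewrite !size_map -[index_enum _]enumT size_enum_ord.
have root_sums : (\sum_(c <- a :: rz) c) *+ 8 = (\sum_(c <- rzeta) c) *+ 9.
  by apply: sum_roots_deriv; rewrite /= ?size_rz ?size_rzeta ?big_cons.
have rz_disk c : c \in rz -> `|c| <= 1 by case/mapP=> k _ ->; case/andP: (z_annulus k).
have a_disk : `|a| <= 1 by rewrite ger0_norm ?ltW.
have zeta_disk j : `|zeta j| <= 1.
  apply: critical_points_in_unit_disk a_disk rz_disk deriv_seq _.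
  by rewrite map_f ?mem_index_enum.
rewrite big_cons !big_map in root_sums; rewrite !big_map in inv_sums.
apply: (sum_estimates_bound _ _ _ a_gt0 _ _ inv_sums root_sums) => [k | j].
- exact: Re_inv_root_bound (ltW a_lt1) (z_annulus k) (z_neq_a k).
- exact: Re_inv_le_Re (zeta_disk j) (zeta_far j).
Qed.
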